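(* Let $n\ge 5$ and let $L$ be a Latin square of order $n$ with horizontal and vertical difference matrices $H=(h_{i,j})$ and $V=(v_{i,j})$. If rows $i$ and $i+1$ of $H$ are equal, then all entries of row $i$ of $V$ are equal. If columns $j$ and $j+1$ of $V$ are equal, then all entries of column $j$ of $H$ are equal. Moreover, $L$ is a row product if and only if every row of $H$ equals the first row of $H$, which holds if and only if every column of $V$ equals the first column of $V$.
   Context: Symbols are $[1,n]$. A Latin square of order $n$ is an $n\times n$ matrix $(m_{i,j})$ over $[1,n]$ with each symbol exactly once in every row and column. $H$ is the $n\times(n-1)$ matrix with $h_{i,j}\in[0,n-1]$, $h_{i,j}\equiv m_{i,j+1}-m_{i,j}\pmod n$; $V$ is the $(n-1)\times n$ matrix with $v_{i,j}\in[0,n-1]$, $v_{i,j}\equiv m_{i+1,j}-m_{i,j}\pmod n$. The difference row of a Latin row $(s_1,\dots,s_n)$ is $(h_1,\dots,h_{n-1})$ with $h_j\equiv s_{j+1}-s_j\pmod n$. A row product is a Latin square obtained by adding a constant mod $n$ to all entries of $\mathrm{prod}(d,d')$, the $n\times n$ matrix with $1$ in cell $(1,1)$ whose horizontal difference matrix has every row equal to a difference row $d$ and whose vertical difference matrix has every column equal to a difference row $d'$. *)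

From mathcomp Require Import all_boot.
Set Implicit Arguments. Unset Strict Implicit. Unset Printing Implicit Defensive.

(* Conventions: rows/columns are indexed 0..n-1 (paper: 1..n); symbols are
   the naturals 1..n.  A square / row is a function on nat; only the
   entries with indices < n matter. *)

Definition latin_row (n : nat) (s : nat -> nat) : Prop :=
  (forall j, j < n -> 1 <= s j <= n) /\
  (forall x, 1 <= x <= n -> exists j, j < n /\ s j = x /\
       forall k, k < n -> s k = x -> k = j).

Definition latin_square (n : nat) (L : nat -> nat -> nat) : Prop :=
  (forall i, i < n -> latin_row n (fun j => L i j)) /\
  (forall j, j < n -> latin_row n (fun i => L i j)).

(* Residue of a - b mod n in [0, n-1] (valid for b <= n). *)
Definition dmod (n a b : nat) : nat := (a + n - b) %% n.

(* Horizontal difference matrix: n x (n-1), H i j for i < n, j < n-1. *)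
Definition Hdiff (n : nat) (L : nat -> nat -> nat) (i j : nat) : nat :=
  dmod n (L i j.+1) (L i j).

(* Vertical difference matrix: (n-1) x n, V i j for i < n-1, j < n. *)
Definition Vdiff (n : nat) (L : nat -> nat -> nat) (i j : nat) : nat :=
  dmod n (L i.+1 j) (L i j).

Definition difference_row (n : nat) (d : nat -> nat) : Prop :=
  exists s, latin_row n s /\
    forall j, j < n.-1 -> d j = dmod n (s j.+1) (s j).

Definition is_prod (n : nat) (d d' : nat -> nat) (P : nat -> nat -> nat) : Prop :=
  (forall i j, i < n -> j < n -> 1 <= P i j <= n) /\
  P 0 0 = 1 /\
  (forall i j, i < n -> j < n.-1 -> Hdiff n P i j = d j) /\
  (forall i j, i < n.-1 -> j < n -> Vdiff n P i j = d' i).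

Definition row_product (n : nat) (L : nat -> nat -> nat) : Prop :=
  exists d d' P c, difference_row n d /\ difference_row n d' /\
    is_prod n d d' P /\
    forall i j, i < n -> j < n -> L i j = P i j + c %[mod n].

From mathcomp Require Import all_boot all_algebra ring zify.
Import GRing.Theory.
Set Implicit Arguments. Unset Strict Implicit.

(* Read in Z/nZ, both difference matrices are discrete derivatives of L, so
   H(i+1,j) - H(i,j) = L(i+1,j+1) - L(i+1,j) - L(i,j+1) + L(i,j)
                     = V(i,j+1) - V(i,j).
   Hence two consecutive rows of H agree exactly when a row of V is
   constant, and dually for the columns; transposing L swaps H and V.
   A row product is, up to the additive constant, determined by its first
   row and first column, and L itself provides one: subtract L(0,0) - 1
   from every entry. *)

Definition bounded_square (n : nat) (L : nat -> nat -> nat) : Prop :=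
  forall i j, i < n -> j < n -> L i j <= n.

Definition transpose (L : nat -> nat -> nat) (i j : nat) : nat := L j i.

Lemma bounded_transpose n L : bounded_square n L -> bounded_square n (transpose L).
Proof. by move=> LB i j Hi Hj; apply: LB. Qed.

Lemma latin_square_bounded n L : latin_square n L -> bounded_square n L.
Proof. by case=> rowsL _ i j Hi Hj; case: (rowsL i Hi) => /(_ j Hj) /andP[]. Qed.

Section DifferencesModN.

Variable n : nat.
Hypothesis n_gt1 : 1 < n.

Local Notation zn x := (x%:R : 'Z_n)%R.

Lemma zn_eq_mod x y : zn x = zn y <-> x = y %[mod n].
Proof.
split=> [E | E]; first by have := congr1 (@nat_of_ord _) E; rewrite !val_Zp_nat.
by apply: ord_inj; rewrite !val_Zp_nat.
Qed.

Lemma zn_inj x y : x < n -> y < n -> zn x = zn y -> x = y.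
Proof. by move=> Hx Hy /zn_eq_mod; rewrite !modn_small. Qed.

Lemma zn_n : zn n = 0%R.
Proof. by rewrite -(Zp_nat_mod n_gt1) modnn. Qed.

Lemma zn_dmod a b : b <= n -> zn (dmod n a b) = (zn a - zn b)%R.
Proof.
move=> Hb; rewrite Zp_nat_mod // natrB; last exact: leq_trans Hb (leq_addl _ _).
by rewrite natrD zn_n addr0.
Qed.

Lemma dmod_ltn a b : dmod n a b < n.
Proof. by rewrite ltn_mod; lia. Qed.

Lemma dmodnn a : dmod n a a = 0.
Proof. by rewrite /dmod addKn modnn. Qed.

Lemma dmod_shift a b c d k : b <= n -> d <= n ->
  a = c + k %[mod n] -> b = d + k %[mod n] -> dmod n a b = dmod n c d.
Proof.
move=> Hb Hd /zn_eq_mod Ea /zn_eq_mod Eb; apply: zn_inj; rewrite ?dmod_ltn //.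
by rewrite !zn_dmod // Ea Eb natrD; ring.
Qed.

Lemma zn_mixed_difference L i j : bounded_square n L -> i.+1 < n -> j.+1 < n ->
  (zn (Hdiff n L i.+1 j) - zn (Hdiff n L i j)
   = zn (Vdiff n L i j.+1) - zn (Vdiff n L i j))%R.
Proof.
by move=> LB Hi Hj; rewrite !zn_dmod; try (apply: LB; lia); ring.
Qed.

Lemma Vdiff_row_const L i : bounded_square n L -> i.+1 < n ->
  (forall j, j < n.-1 -> Hdiff n L i j = Hdiff n L i.+1 j) ->
  forall j, j < n -> Vdiff n L i j = Vdiff n L i 0.
Proof.
move=> LB Hi HH; elim=> // j IH Hj; rewrite -IH; last by lia.
apply: zn_inj; rewrite ?dmod_ltn //.
have := zn_mixed_difference LB Hi Hj; rewrite HH; last by lia.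
by move/eqP; rewrite subrr eq_sym subr_eq0 => /eqP.
Qed.

Lemma Vdiff_cols_eq L : bounded_square n L ->
  (forall i j, i < n -> j < n.-1 -> Hdiff n L i j = Hdiff n L 0 j) ->
  forall i j, i < n.-1 -> j < n -> Vdiff n L i j = Vdiff n L i 0.
Proof.
move=> LB HH i j Hi; apply: Vdiff_row_const => //; first lia.
by move=> k Hk; rewrite HH ?(HH i.+1) //; lia.
Qed.

Lemma Hdiff_rows_eqP L : bounded_square n L ->
  (forall i j, i < n -> j < n.-1 -> Hdiff n L i j = Hdiff n L 0 j) <->
  (forall i j, i < n.-1 -> j < n -> Vdiff n L i j = Vdiff n L i 0).
Proof.
move=> LB; split; first exact: Vdiff_cols_eq.
move=> HV i j Hi Hj.
have := Vdiff_cols_eq (bounded_transpose LB) _ Hj Hi.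
by apply=> a b Ha Hb; apply: HV.
Qed.

Lemma Hdiff_shift L P c : bounded_square n L -> bounded_square n P ->
  (forall i j, i < n -> j < n -> L i j = P i j + c %[mod n]) ->
  forall i j, i < n -> j < n.-1 -> Hdiff n L i j = Hdiff n P i j.
Proof.
move=> LB PB E i j Hi Hj; have Hj' : j.+1 < n by lia.
exact: dmod_shift (LB i j Hi (ltnW Hj')) (PB i j Hi (ltnW Hj'))
  (E i j.+1 Hi Hj') (E i j Hi (ltnW Hj')).
Qed.

Lemma Vdiff_shift L P c : bounded_square n L -> bounded_square n P ->
  (forall i j, i < n -> j < n -> L i j = P i j + c %[mod n]) ->
  forall i j, i < n.-1 -> j < n -> Vdiff n L i j = Vdiff n P i j.
Proof.
move=> LB PB E i j Hi Hj.
by apply: (Hdiff_shift (bounded_transpose LB) (bounded_transpose PB)) => // a b Ha Hb; apply: E.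
Qed.

Lemma row_productP L : latin_square n L ->
  row_product n L <->
  (forall i j, i < n -> j < n.-1 -> Hdiff n L i j = Hdiff n L 0 j).
Proof.
move=> LS; have LB := latin_square_bounded LS.
have n_gt0 : 0 < n by lia.
case: (LS) => rowsL colsL; split.
  case=> d [d' [P [c [_ [_ [[Prange [_ [HP _]]] EL]]]]]] i j Hi Hj.
  have PB : bounded_square n P by move=> a b Ha Hb; case/andP: (Prange a b Ha Hb).
  by rewrite !(Hdiff_shift LB PB EL) // !HP.
move=> HH.
pose P i j := (dmod n (L i j) (L 0 0)).+1.
have PB : bounded_square n P by move=> i j _ _; apply: dmod_ltn.
have /andP[L00_gt0 L00_le] := (rowsL 0 n_gt0).1 0 n_gt0.
have EL i j : i < n -> j < n -> L i j = P i j + (L 0 0).-1 %[mod n].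
  move=> Hi Hj.
  have -> : P i j + (L 0 0).-1 = dmod n (L i j) (L 0 0) + L 0 0 by rewrite /P; lia.
  by apply/zn_eq_mod; rewrite natrD zn_dmod //; ring.
exists (Hdiff n L 0), (Vdiff n L ^~ 0), P, (L 0 0).-1.
split; first by exists (L 0); split=> //; exact: rowsL.
split; first by exists (L ^~ 0); split=> //; exact: colsL.
split; last exact: EL.
split; first by move=> i j _ _; rewrite /P /= dmod_ltn.
split; first by rewrite /P dmodnn.
split=> i j Hi Hj.
  by rewrite -(Hdiff_shift LB PB EL) ?HH.
by rewrite -(Vdiff_shift LB PB EL) // (Vdiff_cols_eq LB HH).
Qed.

End DifferencesModN.

Theorem mainTheorem15 (n : nat) (L : nat -> nat -> nat) :
  5 <= n -> latin_square n L ->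
  (* rows i and i+1 of H equal ==> row i of V constant *)
  (forall i, i.+1 < n ->
     (forall j, j < n.-1 -> Hdiff n L i j = Hdiff n L i.+1 j) ->
     forall j k, j < n -> k < n -> Vdiff n L i j = Vdiff n L i k) /\
  (* columns j and j+1 of V equal ==> column j of H constant *)
  (forall j, j.+1 < n ->
     (forall i, i < n.-1 -> Vdiff n L i j = Vdiff n L i j.+1) ->
     forall i k, i < n -> k < n -> Hdiff n L i j = Hdiff n L k j) /\
  (row_product n L <->
     (forall i j, i < n -> j < n.-1 -> Hdiff n L i j = Hdiff n L 0 j)) /\
  ((forall i j, i < n -> j < n.-1 -> Hdiff n L i j = Hdiff n L 0 j) <->
     (forall i j, i < n.-1 -> j < n -> Vdiff n L i j = Vdiff n L i 0)).
Proof.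
move=> n_ge5 LS; have n_gt1 : 1 < n by lia.
have LB := latin_square_bounded LS.
split.
  move=> i Hi HH j k Hj Hk.
  by rewrite (Vdiff_row_const n_gt1 LB Hi HH Hj) (Vdiff_row_const n_gt1 LB Hi HH Hk).
split.
  move=> j Hj HV i k Hi Hk.
  have E := Vdiff_row_const n_gt1 (bounded_transpose LB) Hj HV.
  exact: etrans (E i Hi) (esym (E k Hk)).
split; [exact: row_productP | exact: Hdiff_rows_eqP].
Qed.
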